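(* For any finite poset $(X,\leqslant)$ and any derivation out-tree $T=(X,E)$, the pair $(T,\phi_E)$ is a tree-based enforcement scheme.
   Context: For a digraph $G$, $x\rightsquigarrow_G y$ means there is a directed path from $x$ to $y$ in $G$ (with $x\rightsquigarrow_G x$ always). A derivation out-tree for $(X,\leqslant)$ is a spanning out-tree $T=(X,E)$ (rooted tree on vertex set $X$ with arcs oriented away from the root) such that $xy\in E$ implies $y<x$; its root $r$ is the maximum element of $X$. Define $\phi_E\colon X\to2^X$ by $\phi_E(r)=\{r\}$ and, for $x\neq r$, $\phi_E(x)=\{z\in X:\exists y\in X \text{ with } yz\in E,\ x\geqslant z,\ x\not\geqslant y\}$. A tree-based enforcement scheme is a pair $(T,\phi)$ with $T$ a derivation out-tree and $\phi\colon X\to2^X$ such that for all $x\in X$: $x\in\phi(x)$; if $u\leqslant x$ then some $z\in\phi(x)$ has $z\rightsquigarrow_T u$; if $u\not\leqslant x$ then no $z\in\phi(x)$ has $z\rightsquigarrow_T u$. *)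

From HB Require Import structures.
From mathcomp Require Import all_boot all_order.
Set Implicit Arguments. Unset Strict Implicit. Unset Printing Implicit Defensive.
Import Order.TTheory.
Local Open Scope order_scope.

(* Directed reachability x ~>_T y is [connect E x y]
   (reflexive-transitive closure, so x ~> x always). *)

Definition is_out_tree (X : finType) (E : rel X) (r : X) : Prop :=
  [/\ forall x, ~~ E x r,
      forall y, y != r -> #|[set x | E x y]| = 1
    & forall y, connect E r y].

Definition derivation_out_tree (d : Order.disp_t) (X : finPOrderType d)
    (E : rel X) (r : X) : Prop :=
  is_out_tree E r /\ (forall x y, E x y -> y < x).

Definition phiE (d : Order.disp_t) (X : finPOrderType d) (E : rel X) (r : X)
    (x : X) : {set X} :=
  if x == r then [set r]
  else [set z | [exists y, [&& E y z, z <= x & ~~ (y <= x)]]].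

Definition tree_enforcement_scheme (d : Order.disp_t) (X : finPOrderType d)
    (E : rel X) (r : X) (phi : X -> {set X}) : Prop :=
  derivation_out_tree E r /\
  (forall x : X,
     [/\ x \in phi x,
         (forall u, u <= x -> exists2 z, z \in phi x & connect E z u)
       & (forall u, ~~ (u <= x) -> forall z, z \in phi x -> ~~ connect E z u)]).

(* Arcs of a derivation out-tree go strictly down, so everything reachable from
   z lies below z; as every element of phi_E(x) lies below x, no element outside
   the down-set of x is reachable from phi_E(x). Conversely, the tree path from
   the root (which is not below x unless x is the root) to any u <= x must enter
   the down-set of x through some arc yz, and that z is in phi_E(x). *)
From HB Require Import structures.
From mathcomp Require Import all_boot all_order.
Set Implicit Arguments. Unset Strict Implicit. Unset Printing Implicit Defensive.
Import Order.TTheory.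
Local Open Scope order_scope.

Lemma connect_enter (T : finType) (e : rel T) (P : pred T) (a b : T) :
  connect e a b -> ~~ P a -> P b ->
  exists y z, [/\ e y z, ~~ P y, P z & connect e z b].
Proof.
case/connectP=> p + ->; elim: p a => [|c p IH] a /=; first by move=> _ /negP.
case/andP=> e_ac c_p notPa Pb; have [Pc | notPc] := boolP (P c).
  by exists a, c; split=> //; apply/connectP; exists p.
exact: IH.
Qed.

Lemma out_tree_in_arc (T : finType) (e : rel T) (r y : T) :
  is_out_tree e r -> y != r -> exists x, e x y.
Proof.
case=> _ card_in _ /card_in /eqP/cards1P[x in_x].
by exists x; have := set11 x; rewrite -in_x inE.
Qed.

Section DerivationTree.

Variables (d : Order.disp_t) (X : finPOrderType d) (E : rel X) (r : X).
Hypothesis tree : derivation_out_tree E r.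

Lemma connect_le (a b : X) : connect E a b -> b <= a.
Proof.
case/connectP=> p + ->; elim: p a => [|c p IH] a //=.
by case/andP=> E_ac /IH/le_trans; apply; apply/ltW/tree.2.
Qed.

Lemma root_connect (u : X) : connect E r u.
Proof. by case: tree => -[]. Qed.

Lemma root_max (x : X) : x <= r.
Proof. exact/connect_le/root_connect. Qed.

Lemma phiE_le (x z : X) : z \in phiE E r x -> z <= x.
Proof.
rewrite /phiE; case: eqP => [-> | _]; first by rewrite inE => /eqP ->.
by rewrite inE => /existsP[y /and3P[]].
Qed.

Lemma phiE_refl (x : X) : x \in phiE E r x.
Proof.
rewrite /phiE; case: eqP => [-> | /eqP x_neq_r]; first exact: set11.
have [y E_yx] := out_tree_in_arc tree.1 x_neq_r.
rewrite inE; apply/existsP; exists y.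
by rewrite E_yx lexx lt_geF //; apply: tree.2.
Qed.

Lemma phiE_cover (x u : X) : u <= x -> exists2 z, z \in phiE E r x & connect E z u.
Proof.
have reach_u := root_connect u.
rewrite /phiE; case: eqP => [-> _ | /eqP x_neq_r u_le_x].
  by exists r; rewrite ?set11.
have r_nle_x : ~~ (r <= x).
  by apply: contra x_neq_r => r_le_x; rewrite eq_le r_le_x root_max.
have [y [z [E_yz y_nle_x z_le_x z_u]]] :=
  connect_enter (P := fun w => w <= x) reach_u r_nle_x u_le_x.
by exists z => //; rewrite inE; apply/existsP; exists y; rewrite E_yz z_le_x.
Qed.

Lemma phiE_sound (x u : X) :
  ~~ (u <= x) -> forall z, z \in phiE E r x -> ~~ connect E z u.
Proof.
move=> u_nle_x z /phiE_le z_le_x; apply: contra u_nle_x => /connect_le u_le_z.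
exact: le_trans z_le_x.
Qed.

End DerivationTree.

Theorem lemma2 (d : Order.disp_t) (X : finPOrderType d) (E : rel X) (r : X) :
  derivation_out_tree E r -> tree_enforcement_scheme E r (phiE E r).
Proof.
move=> tree; split=> // x; split.
- exact: phiE_refl.
- exact: phiE_cover.
- exact: phiE_sound.
Qed.
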